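(* Let $d\in\mathbb{Z}$, $d>0$. Every rational solution $(x,y)\in\mathbb{Q}^2$ with $x\neq0$, $y\neq0$ of $$y^2=x^3-d^2x$$ is of one of the forms $$(x_1,y_1)=\left(d\frac{m+e}{m-e},\ \pm2\sqrt{d\frac{em}{m^2-e^2}}\; d\frac{m+e}{m-e}\right),\qquad (x_2,y_2)=\left(-d\frac{m-e}{m+e},\ \mp2\sqrt{d\frac{em}{m^2-e^2}}\; d\frac{m-e}{m+e}\right),$$ where $e,m\in\mathbb{N}$, $m>e$, $\gcd(m,e)=1$, and there exist $k,j\in\mathbb{N}$ with $$d=\left(\frac{k}{2j}\right)^2\frac{m^2-e^2}{em}.$$ *)

From HB Require Import structures.
From mathcomp Require Import all_boot all_order all_algebra all_field.
Set Implicit Arguments. Unset Strict Implicit. Unset Printing Implicit Defensive.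
Import Order.TTheory GRing.Theory Num.Theory.
Local Open Scope ring_scope.

Definition sqrtQ (q : rat) : algC := sqrtC (ratr q).

(* A nonzero point has y^2 = x (x - d) (x + d) > 0, so either x > d or -d < x < 0.
   In the first case write (x + d)/(x - d) = m/e in lowest terms, in the second
   (d - x)/(d + x) = m/e; solving for x gives the two abscissas, and substituting
   back gives y^2 = r (2x)^2 with r = d e m/(m^2 - e^2).  Hence y = +-2 sqrt(r) x,
   and since r is the square of the rational y/(2x), d = r (m^2 - e^2)/(e m)
   has the required shape. *)
From HB Require Import structures.
From mathcomp Require Import all_boot all_order all_algebra all_field.
From mathcomp Require Import ring lra.
Import Order.TTheory GRing.Theory Num.Theory.
Local Open Scope ring_scope.

Lemma rat_gt1_coprime_frac (q : rat) : 1 < q ->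
  exists m e : nat, [/\ (0 < e)%N, (e < m)%N, coprime m e & q = m%:R / e%:R].
Proof.
move=> q_gt1.
have num_gt0 : 0 < numq q by rewrite numq_gt0 (lt_trans _ q_gt1).
have den_gt0 : (0 < `|denq q|)%N by rewrite absz_gt0 gt_eqF ?denq_gt0.
have q_frac : q = (`|numq q|%N)%:R / (`|denq q|%N)%:R.
  by rewrite !natr_absz !gtr0_norm ?denq_gt0 // divq_num_den.
exists `|numq q|%N, `|denq q|%N; split => //; last exact: coprime_num_den.
by rewrite -(ltr_nat rat) -(mul1r (_ %:R)) -ltr_pdivlMr ?ltr0n // -q_frac.
Qed.

Lemma sqr_rat_natfrac (w : rat) : exists k j : nat, w ^+ 2 = (k%:R / j%:R) ^+ 2.
Proof.
exists `|numq w|%N, `|denq w|%N.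
by rewrite !natr_absz !intr_norm -{1}[w]divq_num_den !expr_div_n !real_normK ?num_real.
Qed.

Lemma ratr_sqrtQ_sqr (r a b : rat) : a ^+ 2 = r * b ^+ 2 ->
  ratr a = sqrtQ r * ratr b \/ ratr a = - (sqrtQ r * ratr b).
Proof.
move=> /(congr1 (fun z : rat => (ratr z : algC))) /=.
rewrite rmorphXn rmorphM rmorphXn /= -(sqrtCK (ratr r)) -exprMn => /eqP.
by rewrite eqf_sqr => /orP [] /eqP ->; [left | right].
Qed.

Lemma ratio_coprime_nat (a b : rat) : 0 < b < a ->
  exists m e : nat, [/\ (0 < e)%N, (e < m)%N, coprime m e & a * e%:R = m%:R * b].
Proof.
case/andP=> b_gt0 lt_ba.
have /rat_gt1_coprime_frac [m [e [e_gt0 lt_em co_me ab_def]]] : 1 < a / b.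
  by rewrite ltr_pdivlMr ?mul1r.
exists m, e; split => //.
by rewrite -(divfK (lt0r_neq0 b_gt0) a) ab_def; field; rewrite pnatr_eq0 -lt0n.
Qed.

Lemma curve_abscissa_param (D x : rat) : 0 < D -> 0 < x ^+ 3 - D ^+ 2 * x ->
  exists e m : nat, [/\ (0 < e)%N, (e < m)%N, coprime m e &
    x = D * (m%:R + e%:R) / (m%:R - e%:R) \/ x = - (D * (m%:R - e%:R) / (m%:R + e%:R))].
Proof.
move=> D_gt0; rewrite (_ : _ - _ = x * ((x - D) * (x + D))); last by ring.
case: (ltgtP x 0) => [x_lt0 | x_gt0 | ->]; last by rewrite mul0r ltxx.
- rewrite nmulr_rgt0 // => rhs_lt0.
  have [|m [e [e_gt0 lt_em co_me eq_me]]] := @ratio_coprime_nat (D - x) (D + x).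
    by apply/andP; split; nra.
  exists e, m; split => //; right.
  have lt_em' : (e%:R : rat) < m%:R by rewrite ltr_nat.
  have e_pos : (0 : rat) < e%:R by rewrite ltr0n.
  apply: (mulIf (_ : m%:R + e%:R != 0)); first lra.
  rewrite mulNr divfK; [nra | lra].
- rewrite pmulr_rgt0 // => rhs_gt0.
  have [|m [e [e_gt0 lt_em co_me eq_me]]] := @ratio_coprime_nat (x + D) (x - D).
    by apply/andP; split; nra.
  exists e, m; split => //; left.
  have lt_em' : (e%:R : rat) < m%:R by rewrite ltr_nat.
  have e_pos : (0 : rat) < e%:R by rewrite ltr0n.
  apply: (mulIf (_ : m%:R - e%:R != 0)); first lra.
  rewrite divfK; [nra | lra].
Qed.

Lemma curve_rhs_param (D m e x : rat) : m ^+ 2 != e ^+ 2 ->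
  x = D * (m + e) / (m - e) \/ x = - (D * (m - e) / (m + e)) ->
  x ^+ 3 - D ^+ 2 * x = D * (e * m) / (m ^+ 2 - e ^+ 2) * (2 * x) ^+ 2.
Proof.
rewrite -subr_eq0 subr_sqr mulf_eq0 negb_or => /andP [me_neq0 mDe_neq0].
by case=> ->; field; rewrite me_neq0 mDe_neq0.
Qed.

Theorem lemma10 (d : int) (hd : 0 < d) (x y : rat) :
  x != 0 -> y != 0 -> y ^+ 2 = x ^+ 3 - (d%:~R) ^+ 2 * x ->
  exists e m : nat,
    [/\ (e < m)%N, coprime m e,
        (exists k j : nat,
           (d%:~R : rat) = (k%:R / (2 * j%:R)) ^+ 2
                           * ((m%:R ^+ 2 - e%:R ^+ 2) / (e%:R * m%:R))) &
        let D : rat := d%:~R in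
        let s : algC := sqrtQ (D * (e%:R * m%:R) / (m%:R ^+ 2 - e%:R ^+ 2)) in
        (x = D * (m%:R + e%:R) / (m%:R - e%:R) /\
           (ratr y = 2%:R * s * ratr (D * (m%:R + e%:R) / (m%:R - e%:R))
            \/ ratr y = - (2%:R * s * ratr (D * (m%:R + e%:R) / (m%:R - e%:R)))))
        \/
        (x = - (D * (m%:R - e%:R) / (m%:R + e%:R)) /\
           (ratr y = - (2%:R * s * ratr (D * (m%:R - e%:R) / (m%:R + e%:R)))
            \/ ratr y = 2%:R * s * ratr (D * (m%:R - e%:R) / (m%:R + e%:R))))].
Proof.
move=> x_neq0 y_neq0; set D : rat := d%:~R => curve.
have D_gt0 : 0 < D by rewrite ltr0z.
have [|e [m [e_gt0 lt_em co_me x_param]]] := @curve_abscissa_param D x D_gt0.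
  by rewrite -curve exprn_even_gt0.
set r := D * (e%:R * m%:R) / (m%:R ^+ 2 - e%:R ^+ 2).
have e_pos : (0 : rat) < e%:R by rewrite ltr0n.
have lt_em' : (e%:R : rat) < m%:R by rewrite ltr_nat.
have y_sqr : y ^+ 2 = r * (2 * x) ^+ 2.
  by rewrite curve; apply: curve_rhs_param x_param; apply/eqP; nra.
have r_sqr : r = (y / x / 2) ^+ 2 by rewrite !expr_div_n y_sqr; field.
exists e, m; split => //.
  have [k [j yx_sqr]] := sqr_rat_natfrac (y / x).
  exists k, j.
  have -> : (k%:R / (2 * j%:R)) ^+ 2 = r.
    by rewrite r_sqr invfM mulrCA mulrC expr_div_n -yx_sqr -expr_div_n.
  by rewrite /r; field; rewrite !lt0r_neq0 //; nra.
have y_pm : ratr y = 2%:R * sqrtQ r * ratr x \/ ratr y = - (2%:R * sqrtQ r * ratr x).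
  by rewrite (mulrC _ (sqrtQ r)) -mulrA -(ratr_nat _ 2) -rmorphM; apply: ratr_sqrtQ_sqr.
case: x_param y_pm => -> y_pm; [left | right]; split => //.
by move: y_pm; rewrite rmorphN mulrN opprK or_comm.
Qed.
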